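(* Let $n>3$, $\theta_1,\dots,\theta_n\in\mathbb R$, and let $V=|0\rangle\langle0|\otimes I_n+|1\rangle\langle1|\otimes\sum_{j=1}^ne^{i\theta_j}|j\rangle\langle j|$ on $\mathbb C^2\otimes\mathbb C^n$ (a Schmidt-rank-two bipartite unitary). (i) Suppose there exist pairwise distinct indices $i_1,i_2,i_3$ with $\sin^2\frac{\theta_{i_1}-\theta_{i_2}}{2}\sin^2\frac{\theta_{i_2}-\theta_{i_3}}{2}\sin^2\frac{\theta_{i_3}-\theta_{i_1}}{2}>0$ and non-negative reals $c_j$, $j\notin\{i_1,i_2,i_3\}$, such that the numbers $$c_{i_1}=\Big(\tfrac12\cos\tfrac{\theta_{i_2}-\theta_{i_3}}{2}-\sum_{j\ne i_1,i_2,i_3}\sin\tfrac{\theta_j-\theta_{i_2}}{2}\sin\tfrac{\theta_j-\theta_{i_3}}{2}c_j\Big)\csc\tfrac{\theta_{i_1}-\theta_{i_2}}{2}\csc\tfrac{\theta_{i_1}-\theta_{i_3}}{2},$$ $$c_{i_2}=\Big(\tfrac12\cos\tfrac{\theta_{i_1}-\theta_{i_3}}{2}-\sum_{j\ne i_1,i_2,i_3}\sin\tfrac{\theta_j-\theta_{i_1}}{2}\sin\tfrac{\theta_j-\theta_{i_3}}{2}c_j\Big)\csc\tfrac{\theta_{i_2}-\theta_{i_1}}{2}\csc\tfrac{\theta_{i_2}-\theta_{i_3}}{2},$$ $$c_{i_3}=\Big(\tfrac12\cos\tfrac{\theta_{i_1}-\theta_{i_2}}{2}-\sum_{j\ne i_1,i_2,i_3}\sin\tfrac{\theta_j-\theta_{i_1}}{2}\sin\tfrac{\theta_j-\theta_{i_2}}{2}c_j\Big)\csc\tfrac{\theta_{i_3}-\theta_{i_1}}{2}\csc\tfrac{\theta_{i_3}-\theta_{i_2}}{2}$$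 are all non-negative. Then $K_E(V)=1$ ebit. (ii) Otherwise $K_E(V)=\max_{1\le i<j\le n}h(i,j)$ ebits, where $h(i,j)=H\Big(\frac{1-|\cos\frac{\theta_i-\theta_j}{2}|}{2},\frac{1+|\cos\frac{\theta_i-\theta_j}{2}|}{2}\Big)$.
   Context: For a bipartite unitary $V$ on $\mathcal H_A\otimes\mathcal H_B$, the entangling power is $K_E(V)=\max E\big(V(|\phi\rangle_{AR_A}\otimes|\psi\rangle_{BR_B})\big)$, the maximum over pure states on $AR_A$ and $BR_B$ with arbitrary finite-dimensional ancillas $R_A,R_B$ ($V$ acting on $A,B$), where $E(|\chi\rangle)=S(\mathrm{Tr}_{AR_A}|\chi\rangle\langle\chi|)$ is the von Neumann entropy, base-2 logarithm (ebits). $H(p,1-p)=-p\log_2p-(1-p)\log_2(1-p)$. *)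

From HB Require Import structures.
From mathcomp Require Import all_boot all_order all_algebra.
From mathcomp Require Import reals exp trigo.
From mathcomp Require Import complex.
Set Implicit Arguments. Unset Strict Implicit. Unset Printing Implicit Defensive.
Import Order.TTheory GRing.Theory Num.Theory.
Local Open Scope ring_scope.
Local Open Scope complex_scope.

Section QInfo.
Variable R : realType.

Definition log2 (x : R) : R := ln x / ln 2.
Definition xlog2x (x : R) : R := if x == 0 then 0 else x * log2 x.

Definition shannon (I : finType) (p : I -> R) : R := - \sum_(k : I) xlog2x (p k).

Definition H2 (p q : R) : R := - (xlog2x p + xlog2x q).

Definition unit_vec (I : finType) (v : I -> R[i]) : Prop :=
  \sum_(k : I) v k * (v k)^* = 1.

(* A spectral decomposition of an operator rho (given by its matrix entries
   rho i j in an orthonormal basis indexed by I): an orthonormal basis of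
   eigenvectors u k with real eigenvalues lam k, rho = sum_k lam_k |u_k><u_k|. *)
Definition spectral_decomp (I : finType) (rho : I -> I -> R[i])
  (lam : I -> R) (u : I -> I -> R[i]) : Prop :=
  (forall k l : I, \sum_(i : I) (u k i)^* * u l i = (k == l)%:R) /\
  (forall i j : I, rho i j = \sum_(k : I) (lam k)%:C * u k i * (u k j)^*).

(* von Neumann entropy (base 2): S(rho) = -sum_k lam_k log2 lam_k over the
   eigenvalues of rho.  Stated as a relation "S(rho) = s". *)
Definition vN_entropy (I : finType) (rho : I -> I -> R[i]) (s : R) : Prop :=
  exists (lam : I -> R) (u : I -> I -> R[i]),
    spectral_decomp rho lam u /\ s = shannon lam.

(* A bipartite operator on C^dA (x) C^dB, given by its matrix entries
   V (x,y) (x',y') = <x,y| V |x',y'>. *)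
Definition bip_op (dA dB : nat) := ('I_dA * 'I_dB)%type -> ('I_dA * 'I_dB)%type -> R[i].

(* Output state chi = V (|phi>_{A R_A} (x) |psi>_{B R_B}), V acting on A,B;
   amplitude <x,r,y,s|chi> *)
Definition out_state (dA dB a b : nat) (V : bip_op dA dB)
  (phi : ('I_dA * 'I_a)%type -> R[i]) (psi : ('I_dB * 'I_b)%type -> R[i])
  (x : 'I_dA) (r : 'I_a) (y : 'I_dB) (s : 'I_b) : R[i] :=
  \sum_(x' : 'I_dA) \sum_(y' : 'I_dB) V (x, y) (x', y') * phi (x', r) * psi (y', s).

(* Reduced state Tr_{A R_A} |chi><chi| on B R_B *)
Definition reduced_BRB (dA dB a b : nat) (V : bip_op dA dB)
  (phi : ('I_dA * 'I_a)%type -> R[i]) (psi : ('I_dB * 'I_b)%type -> R[i])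
  (ys ys' : ('I_dB * 'I_b)%type) : R[i] :=
  \sum_(x : 'I_dA) \sum_(r : 'I_a)
     out_state V phi psi x r ys.1 ys.2 * (out_state V phi psi x r ys'.1 ys'.2)^*.

(* e is the entanglement E of some output V(|phi>|psi>) with finite-dim ancillas *)
Definition achievable_ent (dA dB : nat) (V : bip_op dA dB) (e : R) : Prop :=
  exists (a b : nat) (phi : ('I_dA * 'I_a)%type -> R[i]) (psi : ('I_dB * 'I_b)%type -> R[i]),
    unit_vec phi /\ unit_vec psi /\ vN_entropy (reduced_BRB V phi psi) e.

(* K_E(V) = k : the maximum of the achievable entanglements is k
   (attained, and an upper bound). *)
Definition entangling_power_is (dA dB : nat) (V : bip_op dA dB) (k : R) : Prop :=
  achievable_ent V k /\ (forall e, achievable_ent V e -> e <= k).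

(* V = |0><0| (x) I_n + |1><1| (x) sum_j e^{i theta_j} |j><j| on C^2 (x) C^n *)
Definition V_ctrl_phase (n : nat) (theta : 'I_n -> R) : bip_op 2 n :=
  fun xy xy' =>
    if (xy.1 == xy'.1) && (xy.2 == xy'.2) then
      (if xy.1 == ord0 then 1 else cos (theta xy.2) +i* sin (theta xy.2))
    else 0.

Definition h_ij (ti tj : R) : R :=
  H2 ((1 - `|cos ((ti - tj) / 2)|) / 2) ((1 + `|cos ((ti - tj) / 2)|) / 2).

Definition csc (x : R) : R := (sin x)^-1.

(* The numbers c_{i1} (and, by permuting the arguments, c_{i2}, c_{i3}) *)
Definition c_formula (n : nat) (theta : 'I_n -> R) (c : 'I_n -> R)
  (i1 i2 i3 : 'I_n) : R :=
  (cos ((theta i2 - theta i3) / 2) / 2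
   - \sum_(j < n | (j != i1) && (j != i2) && (j != i3))
        sin ((theta j - theta i2) / 2) * sin ((theta j - theta i3) / 2) * c j)
  * csc ((theta i1 - theta i2) / 2) * csc ((theta i1 - theta i3) / 2).

Definition cond_i (n : nat) (theta : 'I_n -> R) : Prop :=
  exists i1 i2 i3 : 'I_n,
    [/\ i1 != i2, i2 != i3 & i1 != i3] /\
    0 < sin ((theta i1 - theta i2) / 2) ^+ 2 * sin ((theta i2 - theta i3) / 2) ^+ 2
        * sin ((theta i3 - theta i1) / 2) ^+ 2 /\
    exists c : 'I_n -> R,
      (forall j : 'I_n, (j != i1) && (j != i2) && (j != i3) -> 0 <= c j) /\
      0 <= c_formula theta c i1 i2 i3 /\
      0 <= c_formula theta c i2 i1 i3 /\
      0 <= c_formula theta c i3 i1 i2.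

End QInfo.

From HB Require Import structures.
From mathcomp Require Import all_boot all_order all_algebra.
From mathcomp Require Import reals exp trigo.
From mathcomp Require Import complex.
From mathcomp Require Import sesquilinear spectral.
From mathcomp Require Import ring lra.
Import Order.TTheory GRing.Theory Num.Theory.
Local Open Scope complex_scope.
Local Open Scope ring_scope.
Set Implicit Arguments. Unset Strict Implicit. Unset Printing Implicit Defensive.

(* The output of V on |phi>|psi> is sum_x |x> |phi_x> (D^x |psi>) with
   D = diag(e^{i theta_y}), so its reduced state on B R_B is
   p_0 |psi><psi| + p_1 D|psi><psi|D^*, where p_x is the weight of |x> in phi.
   This state has rank at most two, and its two possibly nonzero eigenvalues
   satisfy l_1 l_2 = p_0 p_1 (1 - |g|^2), where g = sum_y q_y e^{i theta_y} is
   the centroid of the phases for the weights q_y of |y> in psi.  Binary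
   entropy increases with l_1 l_2, hence K_E(V) = H((1 - c)/2, (1 + c)/2),
   where c^2 is the least |g|^2 over probability vectors q (attained with
   p_0 = p_1 = 1/2).  Under condition (i) the numbers c_j are convex weights
   with centroid 0: they integrate every quadratic form in
   (cos theta_j/2, sin theta_j/2) to its mean over the circle, so c = 0.
   Otherwise let (i, j) span a longest chord, i.e. minimise
   cos^2((theta_i - theta_j)/2).  A phase strictly on the origin side of that
   chord would form with it a triangle satisfying (i) with all other c_j = 0.
   Hence all phases, and so their centroid, lie beyond the line of the chord,
   which gives c = |cos((theta_i - theta_j)/2)|, attained by q = (d_i + d_j)/2. *)

Section BigSums.
Variables (K : comPzRingType) (I M : finType).

Lemma sum_delta (k : I) (f : I -> K) : \sum_m (k == m)%:R * f m = f k.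
Proof.
rewrite (bigD1 k) //= eqxx mul1r big1 ?addr0 // => m /negPf.
by rewrite eq_sym => ->; rewrite mul0r.
Qed.

Variables (F G : M -> I -> K).

Lemma sum_sandwich (X Y : I -> K) :
  \sum_i \sum_j X i * (\sum_m F m i * G m j) * Y j =
  \sum_m (\sum_i X i * F m i) * (\sum_j G m j * Y j).
Proof.
transitivity (\sum_i \sum_j \sum_m X i * F m i * (G m j * Y j)).
  apply: eq_bigr => i _; apply: eq_bigr => j _.
  rewrite mulr_sumr mulr_suml; apply: eq_bigr => m _; ring.
transitivity (\sum_i \sum_m \sum_j X i * F m i * (G m j * Y j)).
  by apply: eq_bigr => i _; exact: exchange_big.
rewrite exchange_big; apply: eq_bigr => m _.
by rewrite mulr_suml; apply: eq_bigr => i _; rewrite mulr_sumr.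
Qed.

Lemma sum_trace_square :
  \sum_i \sum_j (\sum_m F m i * G m j) * (\sum_m F m j * G m i) =
  \sum_m \sum_m' (\sum_i F m i * G m' i) * (\sum_j F m' j * G m j).
Proof.
transitivity (\sum_i \sum_j \sum_m \sum_m' (F m i * G m' i) * (F m' j * G m j)).
  apply: eq_bigr => i _; apply: eq_bigr => j _.
  rewrite mulr_suml; apply: eq_bigr => m _.
  by rewrite mulr_sumr; apply: eq_bigr => m' _; ring.
transitivity (\sum_i \sum_m \sum_m' \sum_j (F m i * G m' i) * (F m' j * G m j)).
  apply: eq_bigr => i _.
  by rewrite exchange_big; apply: eq_bigr => m _; exact: exchange_big.
rewrite exchange_big; apply: eq_bigr => m _.
rewrite exchange_big; apply: eq_bigr => m' _.
by rewrite mulr_suml; apply: eq_bigr => i _; rewrite mulr_sumr.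
Qed.

End BigSums.

Lemma sum_ord2 (V : nmodType) (f : 'I_2 -> V) : \sum_x f x = f ord0 + f ord_max.
Proof. by rewrite big_ord_recl big_ord1; congr (_ + f _); exact: val_inj. Qed.

(** * Binary entropy *)

Section BinaryEntropy.
Variable R : realType.
Implicit Types a b x y : R.

Lemma ln2_gt0 : 0 < ln (2 : R).
Proof. by apply: ln_gt0; lra. Qed.

Lemma xlog2x0 : xlog2x (0 : R) = 0.
Proof. by rewrite /xlog2x eqxx. Qed.

Lemma H2E a b : H2 a b = - (a * ln a + b * ln b) / ln 2.
Proof.
have xlog2xE x : xlog2x x = x * ln x / ln 2.
  by rewrite /xlog2x /log2; case: eqP => [->|_]; rewrite ?mul0r ?mulrA.
by rewrite /H2 !xlog2xE -mulrDl mulNr.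
Qed.

Lemma H2C a b : H2 a b = H2 b a.
Proof. by rewrite /H2 addrC. Qed.

Lemma H2_01 : H2 0 1 = 0 :> R.
Proof. by rewrite H2E ln1 !mulr0 mul0r addr0 oppr0 mul0r. Qed.

Lemma H2_half : H2 (1 / 2) (1 / 2) = 1 :> R.
Proof.
rewrite H2E -mulrDl div1r lnV ?posrE // (_ : 2^-1 + 2^-1 = 1 :> R); last lra.
by rewrite mul1r opprK divff // gt_eqF // ln2_gt0.
Qed.

Lemma xlnx_tangent x y : 0 <= x -> 0 < y ->
  (ln y + 1) * (x - y) <= x * ln x - y * ln y.
Proof.
move=> x_ge0 y_gt0; have [->|x_neq0] := eqVneq x 0; first by rewrite mul0r; lra.
have x_gt0 : 0 < x by rewrite lt_def x_neq0.
have yx : x * (y / x) = y by rewrite mulrCA divff ?mulr1 // gt_eqF.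
have gibbs : ln y - ln x <= y / x - 1.
  rewrite -ln_div ?posrE //; have := @le_ln1Dx R (y / x - 1).
  rewrite addrCA subrr addr0; apply; rewrite ltrBDl.
  by have := divr_gt0 y_gt0 x_gt0; lra.
have := ler_wpM2l (ltW x_gt0) gibbs; rewrite !mulrBr yx mulr1; nra.
Qed.

Lemma H2_le_mul a b a' b' : 0 <= a -> 0 <= b -> 0 <= a' -> 0 <= b' ->
  a + b = 1 -> a' + b' = 1 -> a * b <= a' * b' -> H2 a b <= H2 a' b'.
Proof.
wlog ab : a b / a <= b.
  move=> W a0 b0 a'0 b'0 s s' p; have [ab|ba] := leP a b; first exact: W.
  rewrite H2C; apply: W => //; try lra; by rewrite mulrC.
wlog ab' : a' b' / a' <= b'.
  move=> W a0 b0 a'0 b'0 s s' p; have [ab'|ba'] := leP a' b'; first exact: W.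
  rewrite (H2C a'); apply: W => //; try lra; by rewrite mulrC.
move=> a0 b0 a'0 b'0 s s' p.
have aa' : a <= a'.
  have eb : b = 1 - a by lra.
  have eb' : b' = 1 - a' by lra.
  by rewrite eb eb' in p; nra.
rewrite !H2E ler_pM2r ?invr_gt0 ?ln2_gt0 // lerN2.
have [a'_eq0|a'_neq0] := eqVneq a' 0.
  have -> : a = a' by lra.
  by have -> : b = b' by lra.
have a'_gt0 : 0 < a' by rewrite lt_def a'_neq0.
have b'_gt0 : 0 < b' by lra.
have := xlnx_tangent a0 a'_gt0; have := xlnx_tangent b0 b'_gt0.
have : ln a' <= ln b' by rewrite ler_ln ?posrE //; lra.
have : b - b' = a' - a by lra.
nra.
Qed.

Lemma H2_eq_mul a b a' b' : 0 <= a -> 0 <= b -> 0 <= a' -> 0 <= b' ->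
  a + b = 1 -> a' + b' = 1 -> a * b = a' * b' -> H2 a b = H2 a' b'.
Proof. by move=> *; apply/le_anti/andP; split; apply: H2_le_mul => //; lra. Qed.

Lemma H2_ge0 a b : 0 <= a -> 0 <= b -> a + b = 1 -> 0 <= H2 a b.
Proof.
by move=> *; rewrite -H2_01; apply: H2_le_mul => //; rewrite ?mul0r ?mulr_ge0 //; lra.
Qed.

End BinaryEntropy.

Section SquaredModulus.
Variable R : rcfType.
Local Notation C := R[i].

Definition sqnorm (z : C) : R := complex.Re z ^+ 2 + complex.Im z ^+ 2.

Lemma sqnormE (z : C) : z * z^* = (sqnorm z)%:C.
Proof. by rewrite -sqr_normc add_Re2_Im2. Qed.

Lemma sqnorm_ge0 (z : C) : 0 <= sqnorm z.
Proof. by rewrite addr_ge0 ?sqr_ge0. Qed.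

Lemma conj_real_complex (r : R) : (r%:C)^* = r%:C :> C.
Proof. exact: conjc_real. Qed.

Lemma sqnorm_real (r : R) : sqnorm r%:C = r ^+ 2.
Proof. by rewrite /sqnorm /= expr0n addr0. Qed.

Lemma sum_complex (I : finType) (f g : I -> R) :
  \sum_i (f i +i* g i) = (\sum_i f i) +i* (\sum_i g i).
Proof. by elim/big_rec3: _ => // i z a b _ ->. Qed.

End SquaredModulus.

(** * Spectra of rank-two states *)

Section SpectralDecomposition.
Variables (R : realType) (I : finType).
Local Notation C := R[i].

Lemma spectral_decomp_exists (rho : I -> I -> C) :
  (forall i j, rho j i = (rho i j)^*) -> exists lam u, spectral_decomp rho lam u.
Proof.
move=> rho_herm.
pose M : 'M[C]_#|I| := \matrix_(a, b) rho (enum_val a) (enum_val b).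
have M_herm : M \is hermsymmx.
  by apply/is_hermitianmxP; rewrite expr0 scale1r; apply/matrixP => a b; rewrite !mxE rho_herm.
have /orthomx_spectralP M_spec := hermitian_normalmx M_herm.
have d_real := hermitian_spectral_diag_real M_herm.
set P := spectralmx M in M_spec; set d := spectral_diag M in M_spec d_real.
have P_unitary : P \is unitarymx by exact: spectral_unitarymx.
rewrite invmx_unitary // in M_spec.
have dE c : d 0 c = (complex.Re (d 0 c))%:C.
  by apply/esym/RRe_real; move/mxOverP: d_real; apply.
have reindex_rank (f : 'I_#|I| -> C) : \sum_c f c = \sum_(k : I) f (enum_rank k).
  by rewrite (reindex (@enum_rank I)) //; exists enum_val => x _; [exact: enum_rankK | exact: enum_valK].
exists (fun k => complex.Re (d 0 (enum_rank k))).
exists (fun k i => (P (enum_rank k) (enum_rank i))^*).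
split=> [k l|i j].
  under eq_bigr do rewrite conjCK.
  have := congr1 (fun A : 'M[C]_#|I| => A (enum_rank k) (enum_rank l)) (unitarymxP P_unitary).
  rewrite !mxE (inj_eq enum_rank_inj) => <-.
  by rewrite reindex_rank; apply: eq_bigr => i _; rewrite !mxE.
have -> : rho i j = M (enum_rank i) (enum_rank j) by rewrite mxE !enum_rankK.
rewrite M_spec mul_mx_diag !mxE reindex_rank; apply: eq_bigr => k _.
by rewrite !mxE -dE conjCK; ring.
Qed.

Variables (rho : I -> I -> C) (lam : I -> R) (u : I -> I -> C).
Hypothesis rho_spec : spectral_decomp rho lam u.

Lemma spectral_orthonormal k l : \sum_i (u k i)^* * u l i = (k == l)%:R.
Proof. by case: rho_spec. Qed.

Lemma spectral_orthonormal' k l : \sum_i u k i * (u l i)^* = (l == k)%:R.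
Proof. by rewrite -spectral_orthonormal; apply: eq_bigr => i _; rewrite mulrC. Qed.

Lemma spectral_entry i j : rho i j = \sum_k (lam k)%:C * u k i * (u k j)^*.
Proof. by case: rho_spec. Qed.

Lemma spectral_eigenvalue k l :
  \sum_i \sum_j (u k i)^* * rho i j * u l j = (lam k)%:C * (k == l)%:R.
Proof.
under eq_bigr do under eq_bigr do rewrite spectral_entry.
rewrite sum_sandwich.
under eq_bigr => m _.
  rewrite spectral_orthonormal.
  have -> : \sum_i (u k i)^* * ((lam m)%:C * u m i) = (lam m)%:C * (k == m)%:R.
    by rewrite -spectral_orthonormal mulr_sumr; apply: eq_bigr => i _; ring.
  over.
rewrite (eq_bigr (fun m => (k == m)%:R * ((lam m)%:C * (m == l)%:R))) ?sum_delta //.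
by move=> m _; ring.
Qed.

Lemma spectral_trace : \sum_i rho i i = \sum_k (lam k)%:C.
Proof.
under eq_bigr do rewrite spectral_entry.
rewrite exchange_big; apply: eq_bigr => k _.
have u_unit : \sum_i u k i * (u k i)^* = 1 by rewrite spectral_orthonormal' eqxx.
by rewrite -[RHS]mulr1 -u_unit mulr_sumr; apply: eq_bigr => i _; ring.
Qed.

Lemma spectral_trace_sq :
  \sum_i \sum_j rho i j * rho j i = \sum_k (lam k)%:C ^+ 2.
Proof.
under eq_bigr do under eq_bigr do rewrite !spectral_entry.
rewrite sum_trace_square; apply: eq_bigr => k _.
have eigen m m' : \sum_i (lam m)%:C * u m i * (u m' i)^* = (lam m)%:C * (m' == m)%:R.
  by rewrite -spectral_orthonormal' mulr_sumr; apply: eq_bigr => i _; ring.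
under eq_bigr do rewrite !eigen.
rewrite (eq_bigr (fun m => (k == m)%:R * ((lam k)%:C * (lam m)%:C * (m == k)%:R))).
  by rewrite sum_delta eqxx mulr1 expr2.
by move=> m _; rewrite (eq_sym m k); ring.
Qed.

End SpectralDecomposition.

Section TwoPointSpectrum.
Variables (R : realType) (I : finType) (lam : I -> R).
Hypotheses (lam_ge0 : forall k, 0 <= lam k) (lam_sum : \sum_k lam k = 1).
Hypothesis lam_triple : forall k1 k2 k3,
  k1 != k2 -> k1 != k3 -> k2 != k3 -> lam k1 * lam k2 * lam k3 = 0.

Lemma sum_support1 (f : R -> R) k1 : f 0 = 0 ->
  (forall k, k != k1 -> lam k = 0) -> \sum_k f (lam k) = f (lam k1).
Proof.
by move=> f0 lam0; rewrite (bigD1 k1) //= big1 ?addr0 // => k /lam0 ->.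
Qed.

Lemma sum_support2 (f : R -> R) k1 k2 : f 0 = 0 -> k1 != k2 ->
  (forall k, k != k1 -> k != k2 -> lam k = 0) ->
  \sum_k f (lam k) = f (lam k1) + f (lam k2).
Proof.
move=> f0 k12 lam0; rewrite (bigD1 k1) //= (bigD1 k2) 1?eq_sym //=.
by rewrite big1 ?addr0 // => k /andP[kk2 kk1]; rewrite lam0.
Qed.

Lemma shannon_two_point : exists l1 l2, [/\ 0 <= l1, 0 <= l2, l1 + l2 = 1,
  \sum_k lam k ^+ 2 = l1 ^+ 2 + l2 ^+ 2 & shannon lam = H2 l1 l2].
Proof.
have [k1 lam_k1|lam_eq0] := pickP (fun k => lam k != 0); last first.
  move: lam_sum; rewrite big1 => [|k _]; last by apply/eqP/negbFE/lam_eq0.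
  by move/eqP; rewrite eq_sym oner_eq0.
have [k2 /andP[k21 lam_k2]|lam_eq0] := pickP (fun k => (k != k1) && (lam k != 0)).
  have lam0 k : k != k1 -> k != k2 -> lam k = 0.
    move=> kk1 kk2; apply/eqP; move: (@lam_triple k1 k2 k).
    rewrite eq_sym k21 ![_ == k]eq_sym kk1 kk2 => /(_ isT isT isT) /eqP.
    by rewrite !mulf_eq0 (negPf lam_k1) (negPf lam_k2).
  rewrite eq_sym in k21.
  exists (lam k1), (lam k2); split => //.
  - by rewrite -(sum_support2 (f:=id) erefl k21 lam0).
  - by rewrite (sum_support2 (f:=fun x => x ^+ 2) _ k21 lam0) // expr0n.
  - by rewrite /shannon (sum_support2 (xlog2x0 R) k21 lam0).
have lam0 k : k != k1 -> lam k = 0.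
  by move=> kk1; move: (lam_eq0 k) => /= /negbT; rewrite negb_and kk1 negbK => /eqP.
have lam_k1_eq1 : lam k1 = 1 by rewrite -lam_sum (sum_support1 (f:=id) erefl lam0).
exists (lam k1), 0; split => //; rewrite ?addr0 //.
- by rewrite (sum_support1 (f:=fun x => x ^+ 2) _ lam0) expr0n ?addr0.
- by rewrite /shannon /H2 (sum_support1 (xlog2x0 R) lam0) xlog2x0 addr0.
Qed.

End TwoPointSpectrum.

Lemma minor3_rank2 (K : comPzRingType) (T : Type) (M : T -> T -> K)
    (p0 p1 : K) (a b c d : T -> K) k1 k2 k3 :
  (forall k l, M k l = p0 * a k * b l + p1 * c k * d l) ->
  M k1 k1 * (M k2 k2 * M k3 k3 - M k2 k3 * M k3 k2)
  - M k1 k2 * (M k2 k1 * M k3 k3 - M k2 k3 * M k3 k1)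
  + M k1 k3 * (M k2 k1 * M k3 k2 - M k2 k2 * M k3 k1) = 0.
Proof. by move=> ME; rewrite !ME; ring. Qed.

Section RankTwoState.
Variables (R : realType) (I : finType) (p : 'I_2 -> R) (v : 'I_2 -> I -> R[i]).
Variable rho : I -> I -> R[i].
Hypothesis rhoE : forall i j, rho i j = \sum_x (p x)%:C * v x i * (v x j)^*.

Lemma rank_two_hermitian i j : rho j i = (rho i j)^*.
Proof.
rewrite !rhoE rmorph_sum; apply: eq_bigr => x _.
by rewrite !rmorphM /= conjCK conj_real_complex; ring.
Qed.

Local Notation g := (\sum_i v ord_max i * (v ord0 i)^*).

Hypotheses (p_ge0 : forall x, 0 <= p x) (p_sum : p ord0 + p ord_max = 1).
Hypothesis v_unit : forall x, unit_vec (v x).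

Section Eigenvalues.
Variables (lam : I -> R) (u : I -> I -> R[i]).
Hypothesis rho_spec : spectral_decomp rho lam u.
Local Notation alpha k x := (\sum_i (u k i)^* * v x i).

Lemma rank_two_eigenvalue k l :
  (lam k)%:C * (k == l)%:R = \sum_x (p x)%:C * alpha k x * (alpha l x)^*.
Proof.
rewrite -(spectral_eigenvalue rho_spec).
under eq_bigr do under eq_bigr do rewrite rhoE.
rewrite sum_sandwich; apply: eq_bigr => x _.
have -> : \sum_j (v x j)^* * u l j = (alpha l x)^*.
  by rewrite rmorph_sum; apply: eq_bigr => j _; rewrite rmorphM /= conjCK mulrC.
by congr (_ * _); rewrite mulr_sumr; apply: eq_bigr => i _; ring.
Qed.

Lemma rank_two_eigenvalue_ge0 k : 0 <= lam k.
Proof.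
have := rank_two_eigenvalue k k; rewrite eqxx mulr1.
under eq_bigr do rewrite -mulrA sqnormE -rmorphM.
rewrite -rmorph_sum => /complexI ->.
by apply: sumr_ge0 => x _; rewrite mulr_ge0 ?sqnorm_ge0.
Qed.

Lemma rank_two_eigenvalue_triple k1 k2 k3 : k1 != k2 -> k1 != k3 -> k2 != k3 ->
  lam k1 * lam k2 * lam k3 = 0.
Proof.
move=> /negPf k12 /negPf k13 /negPf k23.
have M_rank2 k l : (lam k)%:C * (k == l)%:R =
    (p ord0)%:C * alpha k ord0 * (alpha l ord0)^*
    + (p ord_max)%:C * alpha k ord_max * (alpha l ord_max)^*.
  by rewrite rank_two_eigenvalue sum_ord2.
have := minor3_rank2 k1 k2 k3 M_rank2.
rewrite !eqxx k12 k13 k23 !(eq_sym k2) !(eq_sym k3) k12 k13 k23.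
rewrite !mulr0 !mulr1 !subr0 !mul0r !subr0 !addr0 => minor.
by apply: complexI; rewrite !rmorphM /= -mulrA minor.
Qed.

Lemma rank_two_eigenvalue_sum : \sum_k lam k = 1.
Proof.
apply: complexI; rewrite rmorph_sum -(spectral_trace rho_spec) -p_sum rmorphD.
under eq_bigr do rewrite rhoE.
have trace_x x : \sum_i (p x)%:C * v x i * (v x i)^* = (p x)%:C.
  by rewrite -[RHS]mulr1 -(v_unit x) mulr_sumr; apply: eq_bigr => i _; rewrite mulrA.
by rewrite exchange_big sum_ord2 !trace_x.
Qed.

Lemma rank_two_eigenvalue_sum_sq :
  \sum_k lam k ^+ 2 = p ord0 ^+ 2 + p ord_max ^+ 2 + 2 * p ord0 * p ord_max * sqnorm g.
Proof.
apply: complexI; rewrite rmorph_sum.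
under eq_bigr do rewrite rmorphXn.
rewrite -(spectral_trace_sq rho_spec).
under eq_bigr do under eq_bigr do rewrite !rhoE.
rewrite sum_trace_square.
have inner x y : \sum_i (p x)%:C * v x i * (v y i)^* = (p x)%:C * \sum_i v x i * (v y i)^*.
  by rewrite mulr_sumr; apply: eq_bigr => i _; rewrite mulrA.
under eq_bigr do under eq_bigr do rewrite !inner.
rewrite !sum_ord2 !v_unit.
have -> : \sum_i v ord0 i * (v ord_max i)^* = g^*.
  by rewrite rmorph_sum; apply: eq_bigr => i _; rewrite rmorphM /= conjCK mulrC.
by rewrite !expr2 !rmorphD !rmorphM /= rmorph_nat -sqnormE; ring.
Qed.

End Eigenvalues.

Lemma rank_two_vN_entropy e : vN_entropy rho e ->
  exists l1 l2, [/\ 0 <= l1, 0 <= l2, l1 + l2 = 1,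
    l1 * l2 = p ord0 * p ord_max * (1 - sqnorm g) & e = H2 l1 l2].
Proof.
move=> [lam [u [rho_spec ->]]].
have [l1 [l2 [l1_ge0 l2_ge0 l12 sq ->]]] := shannon_two_point
  (rank_two_eigenvalue_ge0 rho_spec) (rank_two_eigenvalue_sum rho_spec)
  (rank_two_eigenvalue_triple rho_spec).
exists l1, l2; split => //.
move: sq; rewrite (rank_two_eigenvalue_sum_sq rho_spec).
have -> : p ord_max = 1 - p ord0 by move: p_sum; lra.
have -> : l2 = 1 - l1 by lra.
by move=> sq; lra.
Qed.

End RankTwoState.

(** * The controlled-phase unitary *)

Definition prob_vector (R : realType) (I : finType) (q : I -> R) : Prop :=
  (forall k, 0 <= q k) /\ \sum_k q k = 1.

Section Marginal.
Variables (R : realType) (A B : finType).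

Definition marginal (f : (A * B)%type -> R[i]) (x : A) : R := \sum_b sqnorm (f (x, b)).

Lemma marginal_ge0 f x : 0 <= marginal f x.
Proof. by apply: sumr_ge0 => b _; exact: sqnorm_ge0. Qed.

Lemma sum_marginal f : (\sum_x marginal f x)%:C = \sum_k f k * (f k)^*.
Proof.
rewrite rmorph_sum; under eq_bigr do rewrite rmorph_sum.
by rewrite pair_bigA; apply: eq_bigr => -[x b] _; rewrite sqnormE.
Qed.

Lemma unit_vecE f : unit_vec f <-> \sum_x marginal f x = 1.
Proof. by rewrite /unit_vec -sum_marginal; split => [/complexI|->]. Qed.

Lemma marginal_prob_vector f : unit_vec f -> prob_vector (marginal f).
Proof. by move/unit_vecE; split => //; exact: marginal_ge0. Qed.

End Marginal.

Definition overlap_entropy (R : realType) (c : R) : R :=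
  H2 ((1 - `|c|) / 2) ((1 + `|c|) / 2).

Section OverlapEntropy.
Variable R : realType.
Implicit Types c : R.

Lemma overlap_mul c : (1 - `|c|) / 2 * ((1 + `|c|) / 2) = (1 - c ^+ 2) / 4.
Proof. by rewrite -(real_normK (num_real c)); field. Qed.

Lemma abs_le1 c : c ^+ 2 <= 1 -> `|c| <= 1.
Proof. by move=> c2; rewrite -ler_sqr ?nnegrE // expr1n real_normK ?num_real. Qed.

Lemma H2_le_overlap_entropy c l1 l2 : 0 <= l1 -> 0 <= l2 -> l1 + l2 = 1 ->
  c ^+ 2 <= 1 -> l1 * l2 <= (1 - c ^+ 2) / 4 -> H2 l1 l2 <= overlap_entropy c.
Proof.
move=> l1_ge0 l2_ge0 l12 /abs_le1 c_le1 l1l2; have c_ge0 := normr_ge0 c.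
by apply: H2_le_mul; rewrite ?overlap_mul //; lra.
Qed.

Lemma H2_eq_overlap_entropy c l1 l2 : 0 <= l1 -> 0 <= l2 -> l1 + l2 = 1 ->
  l1 * l2 = (1 - c ^+ 2) / 4 -> H2 l1 l2 = overlap_entropy c.
Proof.
move=> l1_ge0 l2_ge0 l12 l1l2; have c_ge0 := normr_ge0 c.
have /abs_le1 c_le1 : c ^+ 2 <= 1 by have := mulr_ge0 l1_ge0 l2_ge0; lra.
by apply: H2_eq_mul; rewrite ?overlap_mul //; lra.
Qed.

Lemma overlap_entropy_le c c' : c' ^+ 2 <= c ^+ 2 -> c ^+ 2 <= 1 ->
  overlap_entropy c <= overlap_entropy c'.
Proof.
move=> cc' c_le1; have c_ge0 := normr_ge0 c; have abs_c_le1 := abs_le1 c_le1.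
by apply: H2_le_overlap_entropy; rewrite ?overlap_mul; lra.
Qed.

Lemma overlap_entropy_ge0 c : c ^+ 2 <= 1 -> 0 <= overlap_entropy c.
Proof.
by move=> /abs_le1 c_le1; have c_ge0 := normr_ge0 c; apply: H2_ge0; lra.
Qed.

Lemma overlap_entropy0 : overlap_entropy (0 : R) = 1.
Proof. by rewrite /overlap_entropy normr0 subr0 addr0 H2_half. Qed.

End OverlapEntropy.

Section ControlledPhase.
Variables (R : realType) (n : nat) (theta : 'I_n -> R).
Local Notation C := R[i].
Local Notation V := (V_ctrl_phase theta).

Definition ctrl_phase (x : 'I_2) (y : 'I_n) : C :=
  if x == ord0 then 1 else cos (theta y) +i* sin (theta y).

Definition centroid_sqnorm (q : 'I_n -> R) : R :=
  (\sum_y q y * cos (theta y)) ^+ 2 + (\sum_y q y * sin (theta y)) ^+ 2.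

Lemma ctrl_phase_unit x y : ctrl_phase x y * (ctrl_phase x y)^* = 1.
Proof.
rewrite /ctrl_phase; case: ifP => _; first by rewrite conjC1 mulr1.
by rewrite sqnormE /sqnorm /= cos2Dsin2.
Qed.

Lemma out_state_ctrl_phase a b (phi : ('I_2 * 'I_a)%type -> C)
    (psi : ('I_n * 'I_b)%type -> C) x r y s :
  out_state V phi psi x r y s = ctrl_phase x y * phi (x, r) * psi (y, s).
Proof.
rewrite /out_state (bigD1 x) //= [X in _ + X]big1 ?addr0; last first.
  move=> x' /negPf x'x; apply: big1 => y' _.
  by rewrite /V_ctrl_phase /= eq_sym x'x !mul0r.
rewrite (bigD1 y) //= [X in _ + X]big1 ?addr0; last first.
  by move=> y' /negPf y'y; rewrite /V_ctrl_phase /= eqxx eq_sym y'y /= !mul0r.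
by rewrite /V_ctrl_phase /= !eqxx.
Qed.

Lemma reduced_ctrl_phase a b (phi : ('I_2 * 'I_a)%type -> C)
    (psi : ('I_n * 'I_b)%type -> C) i j :
  reduced_BRB V phi psi i j = \sum_x (marginal phi x)%:C *
    (ctrl_phase x i.1 * psi i) * (ctrl_phase x j.1 * psi j)^*.
Proof.
case: i j => [y s] [y' s']; apply: eq_bigr => x _.
rewrite /marginal rmorph_sum /= !mulr_suml.
apply: eq_bigr => r _.
by rewrite -sqnormE !out_state_ctrl_phase !rmorphM /=; ring.
Qed.

Lemma ctrl_phase_overlap b (psi : ('I_n * 'I_b)%type -> C) :
  sqnorm (\sum_i (ctrl_phase ord_max i.1 * psi i) * (ctrl_phase ord0 i.1 * psi i)^*)
  = centroid_sqnorm (marginal psi).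
Proof.
rewrite (_ : \sum_i _ = \sum_y \sum_s
    (ctrl_phase ord_max y * psi (y, s)) * (ctrl_phase ord0 y * psi (y, s))^*); last first.
  by rewrite pair_bigA; apply: eq_bigr => -[].
rewrite (eq_bigr (fun y => (marginal psi y * cos (theta y)) +i* (marginal psi y * sin (theta y)))).
  by rewrite sum_complex.
move=> y _; rewrite /marginal !mulr_suml -sum_complex; apply: eq_bigr => s _.
rewrite /ctrl_phase eqxx /= mul1r -mulrA sqnormE.
by apply/eqP; rewrite eq_complex /=; apply/andP; split; apply/eqP; ring.
Qed.

Lemma ctrl_phase_output_entropy a b (phi : ('I_2 * 'I_a)%type -> C)
    (psi : ('I_n * 'I_b)%type -> C) e :
  unit_vec phi -> unit_vec psi -> vN_entropy (reduced_BRB V phi psi) e ->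
  exists l1 l2, [/\ 0 <= l1, 0 <= l2, l1 + l2 = 1,
    l1 * l2 = marginal phi ord0 * marginal phi ord_max
              * (1 - centroid_sqnorm (marginal psi)) & e = H2 l1 l2].
Proof.
move=> phi_unit psi_unit; rewrite -ctrl_phase_overlap.
apply: (rank_two_vN_entropy (reduced_ctrl_phase phi psi) (marginal_ge0 phi)).
  by rewrite -sum_ord2; apply/unit_vecE.
move=> x; rewrite /unit_vec -[RHS]psi_unit; apply: eq_bigr => i _.
by rewrite rmorphM /= mulrACA ctrl_phase_unit mul1r.
Qed.

Lemma achievable_ent_ctrl_phase_le c e : c ^+ 2 <= 1 ->
  (forall q, prob_vector q -> c ^+ 2 <= centroid_sqnorm q) ->
  achievable_ent V e -> e <= overlap_entropy c.
Proof.
move=> c_le1 centroid_ge [a [b [phi [psi [phi_unit [psi_unit vN]]]]]].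
have [l1 [l2 [l1_ge0 l2_ge0 l12 l1l2 ->]]] := ctrl_phase_output_entropy phi_unit psi_unit vN.
apply: H2_le_overlap_entropy => //; rewrite l1l2.
have [p_ge0 p_sum] := marginal_prob_vector phi_unit; rewrite sum_ord2 in p_sum.
have cG := centroid_ge _ (marginal_prob_vector psi_unit).
set p0 := marginal phi ord0 in p_sum *; set p1 := marginal phi ord_max in p_sum *.
have p01_ge0 : 0 <= p0 * p1 by exact: mulr_ge0 (p_ge0 _) (p_ge0 _).
have p01_le : p0 * p1 <= 1 / 4 by have := sqr_ge0 (p0 - p1); nra.
have := ler_wpM2l p01_ge0 (lerB (lexx 1) cG).
have := ler_wpM2r (_ : 0 <= 1 - c ^+ 2) p01_le; lra.
Qed.

Lemma achievable_ent_ctrl_phase q c : prob_vector q -> centroid_sqnorm q = c ^+ 2 ->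
  achievable_ent V (overlap_entropy c).
Proof.
move=> [q_ge0 q_sum] qc.
pose phi : ('I_2 * 'I_1)%type -> C := fun _ => (Num.sqrt (1 / 2))%:C.
pose psi : ('I_n * 'I_1)%type -> C := fun i => (Num.sqrt (q i.1))%:C.
have marginal_phi x : marginal phi x = 1 / 2.
  by rewrite /marginal big_ord1 sqnorm_real sqr_sqrtr //; lra.
have marginal_psi y : marginal psi y = q y.
  by rewrite /marginal big_ord1 sqnorm_real sqr_sqrtr.
have phi_unit : unit_vec phi by apply/unit_vecE; rewrite sum_ord2 !marginal_phi; lra.
have psi_unit : unit_vec psi.
  by apply/unit_vecE; rewrite -q_sum; apply: eq_bigr => y _; exact: marginal_psi.
have [lam [u rho_spec]] := spectral_decomp_exists (rank_two_hermitian (reduced_ctrl_phase phi psi)).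
have vN : vN_entropy (reduced_BRB V phi psi) (shannon lam) by exists lam, u.
have [l1 [l2 [l1_ge0 l2_ge0 l12 l1l2 e_eq]]] := ctrl_phase_output_entropy phi_unit psi_unit vN.
rewrite -(H2_eq_overlap_entropy l1_ge0 l2_ge0 l12); first by rewrite -e_eq; exists 1%N, 1%N, phi, psi.
have centroid_psi : centroid_sqnorm (marginal psi) = centroid_sqnorm q.
  by rewrite /centroid_sqnorm; under eq_bigr do rewrite marginal_psi; under [X in _ + X ^+ 2]eq_bigr do rewrite marginal_psi.
by rewrite l1l2 !marginal_phi centroid_psi qc; field.
Qed.

End ControlledPhase.

(** * Phases on the circle *)

Section BinaryFormInterpolation.
Variables (K : comPzRingType) (al be ga : K).

Definition bform (x y : K) : K := al * x ^+ 2 + be * (x * y) + ga * y ^+ 2.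

Local Notation cross x y x' y' := (y * x' - x * y').

(* Lagrange interpolation of a binary quadratic form, and of its mean
   (al + ga)/2 over the unit circle, through three points, with the
   denominators cleared. *)
Lemma bform_interpolation x1 y1 x2 y2 x3 y3 x y :
  cross x1 y1 x2 y2 * cross x1 y1 x3 y3 * cross x2 y2 x3 y3 * bform x y =
    cross x2 y2 x3 y3 * cross x y x2 y2 * cross x y x3 y3 * bform x1 y1
  - cross x1 y1 x3 y3 * cross x y x1 y1 * cross x y x3 y3 * bform x2 y2
  + cross x1 y1 x2 y2 * cross x y x1 y1 * cross x y x2 y2 * bform x3 y3.
Proof. by rewrite /bform; ring. Qed.

Lemma bform_mean_interpolation x1 y1 x2 y2 x3 y3 :
  cross x1 y1 x2 y2 * cross x1 y1 x3 y3 * cross x2 y2 x3 y3 * (al + ga) =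
    cross x2 y2 x3 y3 * (x2 * x3 + y2 * y3) * bform x1 y1
  - cross x1 y1 x3 y3 * (x1 * x3 + y1 * y3) * bform x2 y2
  + cross x1 y1 x2 y2 * (x1 * x2 + y1 * y2) * bform x3 y3.
Proof. by rewrite /bform; ring. Qed.

End BinaryFormInterpolation.

Lemma sum_split3 (V : nmodType) (I : finType) (i1 i2 i3 : I) (F : I -> V) :
  i1 != i2 -> i1 != i3 -> i2 != i3 ->
  \sum_k F k = F i1 + F i2 + F i3 + \sum_(k | (k != i1) && (k != i2) && (k != i3)) F k.
Proof.
move=> i12 i13 i23; rewrite (bigD1 i1) // (bigD1 i2) /= 1?eq_sym // (bigD1 i3) /=.
  by rewrite !addrA; congr (_ + _); apply: eq_bigl => k; rewrite andbC andbA.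
by rewrite ![i3 == _]eq_sym i13 i23.
Qed.

Lemma half_mulr2n (R : realType) (x : R) : x = (x / 2) *+ 2.
Proof. by rewrite -mulr_natr -mulrA mulVf ?mulr1 // pnatr_eq0. Qed.

Section HalfAngles.
Variables (R : realType) (n : nat) (theta : 'I_n -> R).
Local Notation xh k := (cos (theta k / 2)).
Local Notation yh k := (sin (theta k / 2)).
Local Notation sh k l := (sin ((theta k - theta l) / 2)).
Local Notation ch k l := (cos ((theta k - theta l) / 2)).

Lemma sin_half_sub k l : sh k l = yh k * xh l - xh k * yh l.
Proof. by rewrite mulrBl sinB. Qed.

Lemma cos_half_sub k l : ch k l = xh k * xh l + yh k * yh l.
Proof. by rewrite mulrBl cosB. Qed.

Lemma sin_half_subC k l : sh l k = - sh k l.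
Proof. by rewrite !sin_half_sub; ring. Qed.

Lemma cos_half_double k : cos (theta k) = xh k ^+ 2 - yh k ^+ 2.
Proof.
by rewrite {1}[theta k]half_mulr2n cos_mulr2n; have := cos2Dsin2 (theta k / 2); lra.
Qed.

Lemma sin_half_double k : sin (theta k) = 2 * xh k * yh k.
Proof. by rewrite {1}[theta k]half_mulr2n sin_mulr2n; lra.
Qed.

Section ConditionWeights.
Variables (c : 'I_n -> R) (i1 i2 i3 : 'I_n).
Hypotheses (i12 : i1 != i2) (i13 : i1 != i3) (i23 : i2 != i3).
Hypotheses (s12 : sh i1 i2 != 0) (s13 : sh i1 i3 != 0) (s23 : sh i2 i3 != 0).

Definition cond_weight k :=
  if k == i1 then c_formula theta c i1 i2 i3
  else if k == i2 then c_formula theta c i2 i1 i3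
  else if k == i3 then c_formula theta c i3 i1 i2 else c k.

Local Notation others j := ((j != i1) && (j != i2) && (j != i3)).

(* The weights of part (i) integrate every binary quadratic form in the
   half-angle coordinates to its mean over the circle. *)
Lemma cond_weight_bform al be ga :
  \sum_k cond_weight k * bform al be ga (xh k) (yh k) = (al + ga) / 2.
Proof.
set Q := fun k => bform al be ga (xh k) (yh k).
rewrite (sum_split3 _ i12 i13 i23) /cond_weight eqxx ![i2 == _]eq_sym ![i3 == _]eq_sym.
rewrite (negPf i12) (negPf i13) (negPf i23) !eqxx.
rewrite (eq_bigr (fun k => c k * Q k)); last first.
  by move=> k /andP[/andP[/negPf -> /negPf ->] /negPf ->].
rewrite /c_formula /csc (sin_half_subC i1 i2) (sin_half_subC i1 i3) (sin_half_subC i2 i3).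
have perm2 : (fun j => (j != i2) && (j != i1) && (j != i3)) =1 (fun j => others j).
  by move=> j; case: (j != i1); case: (j != i2).
have perm3 : (fun j => (j != i3) && (j != i1) && (j != i2)) =1 (fun j => others j).
  by move=> j; case: (j != i1); case: (j != i2); case: (j != i3).
rewrite (eq_bigl _ _ perm2) (eq_bigl _ _ perm3).
set S1 := \sum_(j | others j) sh j i2 * sh j i3 * c j.
set S2 := \sum_(j | others j) sh j i1 * sh j i3 * c j.
set S3 := \sum_(j | others j) sh j i1 * sh j i2 * c j.
set T := \sum_(j | others j) c j * Q j.
pose D := sh i1 i2 * sh i1 i3 * sh i2 i3.
have D_neq0 : D != 0 by rewrite !mulf_neq0.
have interp j : D * Q j = sh i2 i3 * sh j i2 * sh j i3 * Q i1
    - sh i1 i3 * sh j i1 * sh j i3 * Q i2 + sh i1 i2 * sh j i1 * sh j i2 * Q i3.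
  by rewrite /D !sin_half_sub; exact: bform_interpolation.
have mean : D * (al + ga) = sh i2 i3 * ch i2 i3 * Q i1
    - sh i1 i3 * ch i1 i3 * Q i2 + sh i1 i2 * ch i1 i2 * Q i3.
  by rewrite /D !sin_half_sub !cos_half_sub; exact: bform_mean_interpolation.
have DT : D * T = sh i2 i3 * S1 * Q i1 - sh i1 i3 * S2 * Q i2 + sh i1 i2 * S3 * Q i3.
  rewrite /T /S1 /S2 /S3 !mulr_sumr !mulr_suml -sumrB -big_split /=.
  by apply: eq_bigr => j _; rewrite mulrCA interp; ring.
have -> : T = (D * T) / D by rewrite [D * T]mulrC mulfK.
have -> : al + ga = D * (al + ga) / D by rewrite [D * _]mulrC mulfK.
by rewrite DT mean /D /Q; field; rewrite s12 s13 s23.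
Qed.

End ConditionWeights.

Lemma cond_i_centroid0 : cond_i theta ->
  exists q, prob_vector q /\ centroid_sqnorm theta q = 0.
Proof.
case=> [i1 [i2 [i3 [[i12 i23 i13] [pos [c [c_ge0 [w1_ge0 [w2_ge0 w3_ge0]]]]]]]]].
have [s12 s23 s31] : [/\ sh i1 i2 != 0, sh i2 i3 != 0 & sh i3 i1 != 0].
  by split; apply: (contraTneq _ pos) => ->; rewrite expr0n /= ?(mulr0, mul0r) ltxx.
have s13 : sh i1 i3 != 0 by rewrite -oppr_eq0 -sin_half_subC.
have average := cond_weight_bform c i12 i13 i23 s12 s13 s23.
exists (cond_weight c i1 i2 i3); split; first split.
- move=> k; rewrite /cond_weight.
  by case: ifP => // k1; case: ifP => // k2; case: ifP => // k3; rewrite c_ge0 ?k1 ?k2 ?k3.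
- have := average 1 0 1; rewrite (_ : (1 + 1) / 2 = 1 :> R); last by field.
  by move=> <-; under [RHS]eq_bigr do rewrite /bform !mul1r mul0r addr0 cos2Dsin2 mulr1.
have mean_cos : \sum_k cond_weight c i1 i2 i3 k * cos (theta k) = 0.
  have := average 1 0 (-1); rewrite addrN mul0r => avg; rewrite -[RHS]avg.
  by apply: eq_bigr => k _; rewrite /bform cos_half_double; congr (_ * _); ring.
have mean_sin : \sum_k cond_weight c i1 i2 i3 k * sin (theta k) = 0.
  have := average 0 2 0; rewrite addr0 mul0r => avg; rewrite -[RHS]avg.
  by apply: eq_bigr => k _; rewrite /bform sin_half_double; congr (_ * _); ring.
by rewrite /centroid_sqnorm mean_cos mean_sin expr0n add0r.
Qed.

End HalfAngles.

Section Chords.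
Variable R : realType.
Implicit Types a b c x y z u w : R.

Lemma divr2_ge0 x y z : 0 <= x * y * z -> 0 <= x / y / z.
Proof.
move=> xyz; have [->|y0] := eqVneq y 0; first by rewrite invr0 mulr0 mul0r.
have [->|z0] := eqVneq z 0; first by rewrite invr0 mulr0.
rewrite (_ : x / y / z = x * y * z / (y * z) ^+ 2); last by field; rewrite y0 z0.
by rewrite divr_ge0 ?sqr_ge0.
Qed.

Lemma sqr_le_of_proj c x y u w : u ^+ 2 + w ^+ 2 = 1 ->
  c ^+ 2 <= c * (x * u + y * w) -> c ^+ 2 <= x ^+ 2 + y ^+ 2.
Proof.
move=> uw cp; set p := x * u + y * w in cp.
have p_le : p ^+ 2 <= x ^+ 2 + y ^+ 2.
  have -> : x ^+ 2 + y ^+ 2 = p ^+ 2 + (x * w - y * u) ^+ 2.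
    by rewrite -[LHS]mulr1 -uw /p; ring.
  by rewrite lerDl sqr_ge0.
apply: le_trans p_le; have [->|c0] := eqVneq c 0; first by rewrite expr0n sqr_ge0.
have c2_gt0 : 0 < c ^+ 2 by rewrite exprn_even_gt0.
rewrite -(ler_pM2l c2_gt0) -expr2 -exprMn expr2.
by apply: ler_pM; rewrite ?sqr_ge0 // -expr2 (le_trans cp) // ler_norm.
Qed.

(* Read with a = (theta_i - theta_k)/2 and b = (theta_j - theta_k)/2: the
   chord (i, j) is at least as long as the chords (i, k) and (j, k), and the
   phase theta_k lies strictly on the origin side of it. *)
Lemma origin_side_signs a b :
  cos (a - b) ^+ 2 <= cos a ^+ 2 -> cos (a - b) ^+ 2 <= cos b ^+ 2 ->
  cos (a - b) * cos (a + b) < cos (a - b) ^+ 2 ->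
  [/\ 0 < sin a * sin b * cos (a - b), 0 <= cos b * sin (a - b) * sin a,
      0 <= cos a * sin (b - a) * sin b & sin (a - b) != 0].
Proof.
rewrite !sinB !cosB cosD.
have ua := cos2Dsin2 a; have ub := cos2Dsin2 b.
move: (cos a) (sin a) (cos b) (sin b) ua ub => ca sa cb sb ua ub M1 M2 H.
have M1' : 2 * (sa * sb * ca * cb) + sa ^+ 2 * sb ^+ 2 <= ca ^+ 2 * sb ^+ 2.
  have e : ca ^+ 2 = ca ^+ 2 * (cb ^+ 2 + sb ^+ 2) by rewrite ub mulr1.
  by rewrite e in M1; nra.
have M2' : 2 * (sa * sb * ca * cb) + sa ^+ 2 * sb ^+ 2 <= sa ^+ 2 * cb ^+ 2.
  have e : cb ^+ 2 = cb ^+ 2 * (ca ^+ 2 + sa ^+ 2) by rewrite ua mulr1.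
  by rewrite e in M2; nra.
have H' : 0 < sa * sb * ca * cb + sa ^+ 2 * sb ^+ 2 by nra.
split; [nra | nra | nra |].
apply/eqP => e.
have : (ca * cb + sa * sb) ^+ 2 + (sa * cb - ca * sb) ^+ 2 = 1.
  by rewrite -[RHS]mulr1 -{1}ua -ub; ring.
rewrite e expr0n addr0; nra.
Qed.

End Chords.

Section PairVector.
Variables (R : realType) (I : finType).

Definition pair_vec (i j k : I) : R :=
  if k == i then 1 / 2 else if k == j then 1 / 2 else 0.

Lemma sum_pair_vec i j (F : I -> R) : i != j ->
  \sum_k pair_vec i j k * F k = (F i + F j) / 2.
Proof.
move=> ij; rewrite (bigD1 i) //= (bigD1 j) 1?eq_sym //= big1 ?addr0; last first.
  by move=> k /andP[/negPf kj /negPf ki]; rewrite /pair_vec ki kj mul0r.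
by rewrite /pair_vec eqxx eq_sym (negPf ij) eqxx; lra.
Qed.

Lemma pair_vec_prob i j : i != j -> prob_vector (pair_vec i j).
Proof.
move=> ij; split=> [k|]; first by rewrite /pair_vec; case: ifP => _; [|case: ifP => _]; lra.
rewrite (eq_bigr (fun k => pair_vec i j k * 1)) ?sum_pair_vec //; first lra.
by move=> k _; rewrite mulr1.
Qed.

End PairVector.

Arguments pair_vec {R I}.

Section NotConditionI.
Variables (R : realType) (n : nat) (theta : 'I_n -> R).
Local Notation sh k l := (sin ((theta k - theta l) / 2)).
Local Notation ch k l := (cos ((theta k - theta l) / 2)).
Local Notation mid i j := ((theta i + theta j) / 2).

Lemma c_formula0 i1 i2 i3 :
  c_formula theta (fun _ => 0) i1 i2 i3 = ch i2 i3 / 2 / sh i1 i2 / sh i1 i3.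
Proof. by rewrite /c_formula big1 ?subr0 // => j _; rewrite mulr0. Qed.

Lemma cond_i_of_chord i j k : i != j -> i != k -> j != k ->
  (forall k l, k != l -> ch i j ^+ 2 <= ch k l ^+ 2) ->
  ch i j * cos (theta k - mid i j) < ch i j ^+ 2 -> cond_i theta.
Proof.
move=> ij ik jk ch_min H.
have M1 := ch_min _ _ ik; have M2 := ch_min _ _ jk.
set a := (theta i - theta k) / 2 in M1 *; set b := (theta j - theta k) / 2 in M2 *.
have ab : (theta i - theta j) / 2 = a - b by rewrite /a /b; lra.
have ba : (theta j - theta i) / 2 = b - a by rewrite /a /b; lra.
have ka : (theta k - theta i) / 2 = - a by rewrite /a; lra.
have kb : (theta k - theta j) / 2 = - b by rewrite /b; lra.
have kab : theta k - mid i j = - (a + b) by rewrite /a /b; lra.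
rewrite ab in M1 M2 H; rewrite kab cosN in H.
have [pos g1 g2 sab] := origin_side_signs M1 M2 H.
have [sa sb] : sin a != 0 /\ sin b != 0.
  by split; apply: contraTneq pos => ->; rewrite !(mulr0, mul0r) ltxx.
exists i, j, k; split; first by split.
split.
  rewrite ab ka -/b sinN sqrrN.
  have sqr_gt0 (x : R) : x != 0 -> 0 < x ^+ 2 by move=> x0; rewrite exprn_even_gt0 // x0 orbT.
  by apply: mulr_gt0; [apply: mulr_gt0|]; exact: sqr_gt0.
exists (fun _ => 0); split => //.
rewrite !c_formula0 ab ba ka kb !sinN -/a -/b.
by split; [|split]; apply: divr2_ge0; lra.
Qed.

Lemma beyond_longest_chord i j k : i != j -> ~ cond_i theta ->
  (forall k l, k != l -> ch i j ^+ 2 <= ch k l ^+ 2) ->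
  ch i j ^+ 2 <= ch i j * cos (theta k - mid i j).
Proof.
move=> ij not_cond ch_min.
have [->|ki] := eqVneq k i.
  by rewrite (_ : theta i - mid i j = (theta i - theta j) / 2) ?expr2 //; lra.
have [->|kj] := eqVneq k j.
  by rewrite (_ : theta j - mid i j = - ((theta i - theta j) / 2)) ?cosN ?expr2 //; lra.
rewrite leNgt; apply/negP => H; apply: not_cond.
by apply: (cond_i_of_chord ij _ _ ch_min H); rewrite eq_sym.
Qed.

Lemma not_cond_i_centroid_ge : (1 < n)%N -> ~ cond_i theta ->
  exists i j, [/\ i != j, forall k l, k != l -> ch i j ^+ 2 <= ch k l ^+ 2
    & forall q, prob_vector q -> ch i j ^+ 2 <= centroid_sqnorm theta q].
Proof.
move=> n_gt1 not_cond.
have [[i j] /= ij ch_min] := @arg_minP _ _ _ (Ordinal (ltnW n_gt1), Ordinal n_gt1)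
  (fun p : 'I_n * 'I_n => p.1 != p.2) (fun p => ch p.1 p.2 ^+ 2) isT.
have {}ch_min k l : k != l -> ch i j ^+ 2 <= ch k l ^+ 2 by move=> kl; exact: (ch_min (k, l)).
exists i, j; split => // q [q_ge0 q_sum].
apply: (sqr_le_of_proj (cos2Dsin2 (mid i j))).
rewrite (_ : ch i j ^+ 2 = \sum_k q k * ch i j ^+ 2); last by rewrite -mulr_suml q_sum mul1r.
rewrite !mulr_suml -big_split mulr_sumr; apply: ler_sum => k _ /=.
rewrite -!mulrA -mulrDr -cosB [X in _ <= X]mulrCA.
apply: ler_wpM2l; first exact: q_ge0.
exact: beyond_longest_chord.
Qed.

Lemma centroid_pair_vec i j : i != j -> centroid_sqnorm theta (pair_vec i j) = ch i j ^+ 2.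
Proof.
move=> ij; rewrite /centroid_sqnorm !sum_pair_vec //.
have cos_sub : cos (theta i) * cos (theta j) + sin (theta i) * sin (theta j) = 2 * ch i j ^+ 2 - 1.
  rewrite -cosB {1}[theta i - theta j]half_mulr2n cos_mulr2n.
  by have := cos2Dsin2 ((theta i - theta j) / 2); lra.
have := cos2Dsin2 (theta i); have := cos2Dsin2 (theta j); lra.
Qed.

End NotConditionI.

Lemma bigmax_pairs (R : realDomainType) n (f : 'I_n -> 'I_n -> R) i j :
  i != j -> (forall k l, 0 <= f k l) -> (forall k l, f l k = f k l) ->
  (forall k l, k != l -> f k l <= f i j) ->
  \big[Num.max/0]_(k < n) \big[Num.max/0]_(l < n | (k < l)%N) f k l = f i j.
Proof.
move=> ij f_ge0 fC f_max; apply/le_anti/andP; split.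
  apply: bigmax_le => [|k _]; first exact: f_ge0.
  by apply: bigmax_le => [|l kl]; [exact: f_ge0 | rewrite f_max // neq_ltn kl].
have [ij_lt|ji] := ltnP i j; first exact: le_trans (le_bigmax_cond _ _ ij_lt) (le_bigmax _ _ i).
have ji_lt : (j < i)%N by rewrite ltn_neqAle ji andbT eq_sym.
by rewrite -fC; exact: le_trans (le_bigmax_cond _ _ ji_lt) (le_bigmax _ _ j).
Qed.

Section EntanglingPower.
Variables (R : realType) (n : nat) (theta : 'I_n -> R).
Local Notation V := (V_ctrl_phase theta).

Lemma entangling_power_ctrl_phase c :
  (exists q, prob_vector q /\ centroid_sqnorm theta q = c ^+ 2) ->
  (forall q, prob_vector q -> c ^+ 2 <= centroid_sqnorm theta q) ->
  c ^+ 2 <= 1 -> entangling_power_is V (overlap_entropy c).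
Proof.
move=> [q [q_prob qc]] centroid_ge c_le1; split; first exact: achievable_ent_ctrl_phase qc.
by move=> e; apply: achievable_ent_ctrl_phase_le.
Qed.

Lemma cos_sqr_le1 (x : R) : cos x ^+ 2 <= 1.
Proof. by have := cos2Dsin2 x; have := sqr_ge0 (sin x); lra. Qed.

Lemma h_ij_ge0 (s t : R) : 0 <= h_ij s t.
Proof. exact/overlap_entropy_ge0/cos_sqr_le1. Qed.

Lemma h_ijC (s t : R) : h_ij t s = h_ij s t.
Proof. by rewrite /h_ij (_ : (t - s) / 2 = - ((s - t) / 2)) ?cosN //; lra. Qed.

End EntanglingPower.

Unset Implicit Arguments.

Theorem theorem4 (R : realType) (n : nat) (theta : 'I_n -> R) :
  (3 < n)%N ->
  (cond_i theta -> entangling_power_is (V_ctrl_phase theta) 1) /\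
  (~ cond_i theta ->
     entangling_power_is (V_ctrl_phase theta)
       (\big[Num.max/0]_(i < n) \big[Num.max/0]_(j < n | (i < j)%N)
           h_ij (theta i) (theta j))).
Proof.
move=> n_gt3; split => [cond | not_cond].
  rewrite -(overlap_entropy0 R); apply: entangling_power_ctrl_phase.
  - by have [q [q_prob q0]] := cond_i_centroid0 cond; exists q; rewrite q0 expr0n.
  - by move=> q _; rewrite expr0n addr_ge0 ?sqr_ge0.
  - by rewrite expr0n ler01.
have [i [j [ij ch_min centroid_ge]]] := not_cond_i_centroid_ge (ltnW (ltnW n_gt3)) not_cond.
rewrite (@bigmax_pairs _ _ (fun k l => h_ij (theta k) (theta l)) i j ij) /=.
- apply: entangling_power_ctrl_phase => //; last exact: cos_sqr_le1.
  by exists (pair_vec i j); split; [exact: pair_vec_prob | exact: centroid_pair_vec].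
- by move=> k l; exact: h_ij_ge0.
- by move=> k l; exact: h_ijC.
by move=> k l kl; apply: overlap_entropy_le; [exact: ch_min | exact: cos_sqr_le1].
Qed.
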